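(* For every odd $n\geq 5$, there exists a smooth nondegenerate line fibration of $\mathbb R^n$ such that the hyperplane distribution orthogonal to the fibers is not a contact structure.
   Context: A smooth line fibration of $\mathbb R^n$ is given by a smooth unit vector field $V$ on $\mathbb R^n$ all of whose integral curves are straight lines (equivalently $\nabla_V V\equiv 0$); the fibers are these oriented lines. It is nondegenerate if at every point the covariant derivative $\nabla V$ vanishes only in the direction of $V$, i.e. $\nabla_X V=0$ implies $X$ is a multiple of $V$. The orthogonal hyperplane distribution is $V^\perp$, the kernel of the $1$-form dual to $V$; it is a contact structure if this $1$-form $\alpha$ satisfies $\alpha\wedge(d\alpha)^{(n-1)/2}\neq 0$ everywhere. *)

From HB Require Import structures.
From mathcomp Require Import all_boot all_order all_algebra all_fingroup.
From mathcomp Require Import all_classical all_reals all_analysis.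
Set Implicit Arguments. Unset Strict Implicit. Unset Printing Implicit Defensive.
Import Order.TTheory GRing.Theory Num.Theory.
Import numFieldNormedType.Exports.
Local Open Scope ring_scope.

Section Fibrations.
Variable R : realType.

Definition iterD {U W : normedModType R} (vs : seq U) (f : U -> W) : U -> W :=
  foldr (fun v g => fun x => 'D_v g x) f vs.

Definition smooth {U W : normedModType R} (f : U -> W) : Prop :=
  forall vs : seq U,
    (forall x v, derivable (iterD vs f) x v) /\ continuous (iterD vs f).

Definition e_ {n : nat} (i : 'I_n) : 'rV[R]_n := delta_mx 0 i.

Definition unit_field {n : nat} (V : 'rV[R]_n -> 'rV[R]_n) : Prop :=
  forall x, \sum_(i < n) (V x 0 i) ^+ 2 = 1.

(* covariant derivative nabla_X V at x (flat connection on R^n) *)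
Definition nabla {n : nat} (V : 'rV[R]_n -> 'rV[R]_n) (x X : 'rV[R]_n) : 'rV[R]_n :=
  'D_X V x.

Definition line_fibration {n : nat} (V : 'rV[R]_n -> 'rV[R]_n) : Prop :=
  smooth V /\ unit_field V /\ forall x, nabla V x (V x) = 0.

Definition nondegenerate_fibration {n : nat} (V : 'rV[R]_n -> 'rV[R]_n) : Prop :=
  forall x X, nabla V x X = 0 -> exists c : R, X = c *: V x.

(* alpha = sum_i V_i dx_i ; d alpha (e_i, e_j) = d_i V_j - d_j V_i *)
Definition alpha {n : nat} (V : 'rV[R]_n -> 'rV[R]_n) (x : 'rV[R]_n) (i : 'I_n) : R :=
  V x 0 i.

Definition dalpha {n : nat} (V : 'rV[R]_n -> 'rV[R]_n) (x : 'rV[R]_n) (i j : 'I_n) : R :=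
  nabla V x (e_ i) 0 j - nabla V x (e_ j) 0 i.

(* In dimension n = 2k+1: the value (up to the nonzero normalising constant
   of the alternation) of the top form alpha /\ (d alpha)^k on (e_0,...,e_{n-1}):
   sum over sigma of sgn(sigma) alpha(e_s0) prod_m dalpha(e_s(2m+1), e_s(2m+2)). *)
Definition alpha_wedge_dalpha_pow {k : nat}
    (V : 'rV[R]_(k.*2.+1) -> 'rV[R]_(k.*2.+1)) (x : 'rV[R]_(k.*2.+1)) : R :=
  \sum_(s : 'S_(k.*2.+1))
    (-1) ^+ s * alpha V x (s ord0) *
    \prod_(m < k) dalpha V x (s (inord m.*2.+1)) (s (inord m.*2.+2)).

Definition orth_contact {k : nat} (V : 'rV[R]_(k.*2.+1) -> 'rV[R]_(k.*2.+1)) : Prop :=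
  forall x, alpha_wedge_dalpha_pow V x != 0.

End Fibrations.

(* The fibers are the lines t |-> (t, (1 + t A) p), p in R^(n-1), where A is a linear map
   of R^(n-1) with (A^2 + 1)^2 = 0.  Such an A has no real eigenvalue, so 1 + t A is
   invertible for every real t and exactly one of these lines passes through (t, q): the
   one with direction (1, (1 + t A)^-1 A q), which we normalise to get V.  Differentiating
   (1 + t A) w = A q along a direction X in which V is constant gives A (q_X - X_0 w) = 0,
   so V is nondegenerate because A is injective.  At the origin V = e_0 and, on e_0^perp,
   d alpha is the bilinear form of A - A^T; choosing A block diagonal, with one 4 x 4 block
   M such that M - M^T has e_1 in its kernel followed by plane rotations, makes
   alpha /\ (d alpha)^k vanish at the origin. *)

From Pilot Require Import Defs.
From HB Require Import structures.
From mathcomp Require Import all_boot all_order all_algebra all_fingroup.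
From mathcomp Require Import all_classical all_reals all_analysis.
From mathcomp Require Import ring zify.

Set Implicit Arguments. Unset Strict Implicit. Unset Printing Implicit Defensive.
Import Order.TTheory GRing.Theory Num.Theory.
Import numFieldNormedType.Exports.
Local Open Scope ring_scope.

Lemma scaleRE (R : realType) (a b : R) : a *: b = a * b.
Proof. by []. Qed.

Section Elementary.
Variables (R : realType) (n : nat).
Local Notation U := 'rV[R]_n.

Lemma is_derive_coord (i : 'I_n) (x v : U) : is_derive x v (fun y : U => y 0 i) (v 0 i).
Proof.
have dc : derivable (fun y : U => y 0 i) x v by exact/diff_derivable/differentiable_coord.
apply: DeriveDef => //.
by rewrite -[in RHS](derive_id x v) derive_mx ?mxE //; exact: derivable_id.
Qed.

Inductive elementary : (U -> R) -> Prop :=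
| elementary_cst (c : R) : elementary (fun=> c)
| elementary_coord (i : 'I_n) : elementary (fun x => x 0 i)
| elementaryD f g : elementary f -> elementary g -> elementary (fun x => f x + g x)
| elementaryM f g : elementary f -> elementary g -> elementary (fun x => f x * g x)
| elementaryV f : elementary f -> (forall x, f x != 0) -> elementary (fun x => (f x)^-1)
| elementary_sqrt f : elementary f -> (forall x, 0 < f x) ->
    elementary (fun x => Num.sqrt (f x)).

Lemma eq_elementary f g : f =1 g -> elementary f -> elementary g.
Proof. by move=> /funext <-. Qed.

Lemma elementaryN f : elementary f -> elementary (fun x => - f x).
Proof.
move=> ef; apply: eq_elementary (elementaryM (elementary_cst (-1)) ef) => x.
exact: mulN1r.
Qed.

Lemma elementaryB f g : elementary f -> elementary g -> elementary (fun x => f x - g x).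
Proof. by move=> ef eg; exact: elementaryD ef (elementaryN eg). Qed.

Lemma elementary_div f g : elementary f -> elementary g -> (forall x, g x != 0) ->
  elementary (fun x => f x / g x).
Proof. by move=> ef eg g0; exact: elementaryM ef (elementaryV eg g0). Qed.

Lemma elementary_sqr f : elementary f -> elementary (fun x => f x ^+ 2).
Proof. by move=> ef; apply: eq_elementary (elementaryM ef ef) => x; rewrite expr2. Qed.

Lemma elementary_sum m (F : 'I_m -> U -> R) : (forall i, elementary (F i)) ->
  elementary (fun x => \sum_(i < m) F i x).
Proof.
move=> eF; rewrite -fct_sumE; elim/big_ind: _ => //.
- exact: elementary_cst.
- by move=> f g ef eg; exact: elementaryD ef eg.
Qed.

Lemma differentiable_sqrt (r : R) : 0 < r -> differentiable (@Num.sqrt R) r.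
Proof. by move=> r0; apply/derivable1_diffP; exact: @ex_derive _ _ _ _ _ _ _ (is_derive1_sqrt r0). Qed.

Lemma elementary_differentiable f x : elementary f -> differentiable f x.
Proof.
move=> ef; elim: ef x => {f} [c|i|f g _ df _ dg|f g _ df _ dg|f _ df f0|f _ df f0] x.
- exact: differentiable_cst.
- exact: differentiable_coord.
- exact: differentiableD.
- exact: differentiableM.
- exact: differentiableV.
- exact: differentiable_comp (df x) (differentiable_sqrt (f0 x)).
Qed.

Lemma elementary_derive f v : elementary f ->
  exists2 f', elementary f' & forall x, is_derive x v f (f' x).
Proof.
elim=> {f} [c|i|f g _ [f' ef' df] _ [g' eg' dg]|f g ef [f' ef' df] eg [g' eg' dg]
           |f ef [f' ef' df] f0|f ef [f' ef' df] f0].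
- by exists (fun=> 0); [exact: elementary_cst | move=> x; exact: is_derive_cst].
- by exists (fun=> v 0 i); [exact: elementary_cst | move=> x; exact: is_derive_coord].
- exists (fun x => f' x + g' x); first exact: elementaryD.
  by move=> x; exact: is_deriveD.
- exists (fun x => f x * g' x + g x * f' x).
    by apply: elementaryD; exact: elementaryM.
  by move=> x; exact: is_deriveM.
- exists (fun x => - (f x * f x)^-1 * f' x).
    apply: elementaryM ef'; apply: elementaryN; apply: elementaryV (elementaryM ef ef) _.
    by move=> x; rewrite mulf_neq0.
  move=> x; have dfx := df x.
  apply: DeriveDef; first exact: derivableV (f0 x) (@ex_derive _ _ _ _ _ _ _ dfx).
  by rewrite deriveV ?(@ex_derive _ _ _ _ _ _ _ dfx) // derive_val expr2.
- have s0 x : Num.sqrt (f x) != 0 by rewrite gt_eqF ?sqrtr_gt0.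
  exists (fun x => f' x / (2 * Num.sqrt (f x))).
    apply: elementary_div ef' _ _; last by move=> x; rewrite mulf_neq0.
    exact: elementaryM (elementary_cst 2) (elementary_sqrt ef f0).
  move=> x; have dfx := elementary_differentiable x ef.
  have dsx := differentiable_sqrt (f0 x).
  have dsf := differentiable_comp dfx dsx.
  apply: DeriveDef; first exact: diff_derivable.
  rewrite (deriveE _ dsf) diff_comp // deriv1E; last exact: diff_derivable.
  by rewrite /= -deriveE // derive_val derive1E derive_sqrt // !scaleRE mulrC.
Qed.

Definition elementary_field (G : U -> U) := forall j, elementary (fun x => G x 0 j).

Lemma elementary_field_differentiable G x : elementary_field G -> differentiable G x.
Proof.
move=> eG; rewrite (_ : G = \sum_(j < n) (fun x => G x 0 j *: (delta_mx 0 j : U))).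
  by apply: differentiable_sum => j; exact/differentiableZl/elementary_differentiable.
by rewrite fct_sumE; apply/funext => y; rewrite [LHS]row_sum_delta.
Qed.

Lemma elementary_field_derive G v : elementary_field G ->
  elementary_field (fun x => 'D_v G x).
Proof.
move=> eG j; have [g eg dg] := elementary_derive v (eG j).
apply: eq_elementary eg => x.
by rewrite derive_mx ?mxE ?derive_val //; exact/diff_derivable/elementary_field_differentiable.
Qed.

Lemma elementary_field_smooth G : elementary_field G -> smooth G.
Proof.
move=> eG vs; have eD : elementary_field (Defs.iterD vs G).
  by elim: vs => [|v vs IH] //=; exact: elementary_field_derive.
split=> [x v|x]; first exact/diff_derivable/elementary_field_differentiable.
exact/differentiable_continuous/elementary_field_differentiable.
Qed.

End Elementary.
Arguments elementary_cst {R n}.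
Arguments elementary_coord {R n}.

Section Operator.
Variable R : realType.
Implicit Types (g : nat -> R) (t : R).

(* R^(n-1) is modelled by sequences vanishing from index n-1 on (see [supported]).  [Aop] is
   block diagonal: a 4 x 4 block M on the indices 0..3, with (M^2 + 1)^2 = 0 and
   M_0j = M_j0 for all j, followed by the rotations of the planes (2i, 2i+1), i >= 2. *)
Definition Aop g (j : nat) : R :=
  match j with
  | 0 => g 2%N | 1 => g 2%N + g 3%N | 2 => g 0%N - 4%:R * g 1%N | 3 => g 1%N
  | _ => if odd j then g j.-1 else - g j.+1
  end.

Lemma Aop_tail g j : (3 < j)%N -> Aop g j = if odd j then g j.-1 else - g j.+1.
Proof. by do 4 (case: j => [|j] //). Qed.

Lemma Aop_is_linear : linear Aop.
Proof.
move=> a f g; apply/funext => j; rewrite !fctE /GRing.scale /=.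
by do 4 (case: j => [|j] /=; first by ring); case: ifP => _; ring.
Qed.

HB.instance Definition _ := GRing.isLinear.Build R (nat -> R) (nat -> R) _ Aop Aop_is_linear.

Lemma Aop2_tail g j : (3 < j)%N -> Aop (Aop g) j = - g j.
Proof.
case: j => [|[|[|[|m]]]] // _ /=; rewrite !negbK.
by case: m => [|m] //=; rewrite !negbK; case: (odd m) => //=; rewrite opprK.
Qed.

Lemma Aop4 g : Aop (Aop (Aop (Aop g))) = - (2 *: Aop (Aop g)) - g.
Proof.
apply/funext => j; rewrite !fctE /GRing.scale /=.
case: (ltnP 3 j) => j3; last by case: j j3 => [|[|[|[|j]]]] //= _; ring.
by rewrite !Aop2_tail //; ring.
Qed.

Lemma sqr_add1_neq0 t : 1 + t ^+ 2 != 0.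
Proof. by rewrite gt_eqF // ltr_pwDl // sqr_ge0. Qed.

(* (1 + tA)^-1 = (1 - tA) (1 + t^2 (A^2 + 1) / c) / c with c = 1 + t^2, because
   (1 + tA) (1 - tA) = c - t^2 (A^2 + 1) and (A^2 + 1)^2 = 0. *)
Definition resolvent t g : nat -> R :=
  let h := g - t *: Aop g in
  (1 + t ^+ 2)^-1 *: h + (t ^+ 2 / (1 + t ^+ 2) ^+ 2) *: (Aop (Aop h) + h).

Lemma resolventK t g : resolvent t (g + t *: Aop g) = g.
Proof.
have c0 := sqr_add1_neq0 t.
rewrite /resolvent !(linearD, linearZ, linearN, linearB) /= Aop4.
by apply/funext => j; rewrite !fctE /GRing.scale /=; field.
Qed.

Lemma resolventE t g : resolvent t g + t *: Aop (resolvent t g) = g.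
Proof.
have c0 := sqr_add1_neq0 t.
rewrite /resolvent !(linearD, linearZ, linearN, linearB) /= Aop4.
by apply/funext => j; rewrite !fctE /GRing.scale /=; field.
Qed.

Lemma resolvent_unique t g h : h + t *: Aop h = g -> h = resolvent t g.
Proof. by move<-; rewrite resolventK. Qed.

Lemma resolvent0 t : resolvent t 0 = 0.
Proof. by have := resolventK t 0; rewrite linear0 scaler0 addr0. Qed.

Lemma Aop_inj g : Aop g = 0 -> g = 0.
Proof.
move=> Ag0; have := Aop4 g; rewrite Ag0 !linear0 sub0r.
by move/eqP; rewrite eq_sym oppr_eq0 => /eqP.
Qed.

Lemma Aop_delta0 j : Aop (fun i => (i == 0%N)%:R) j = (j == 2%N)%:R.
Proof. by case: j => [|[|[|[|j]]]] //=; rewrite ?addr0 ?mulr0 ?subr0 //; case: ifP; rewrite ?oppr0. Qed.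

Definition supported (m : nat) g := forall j, (m <= j)%N -> g j = 0.

Lemma Aop_supported m g : (3 < m)%N -> ~~ odd m -> supported m g -> supported m (Aop g).
Proof.
move=> m3 em gm j mj; rewrite Aop_tail ?(leq_trans m3 mj) //.
case: ifP => oj; last by rewrite gm ?oppr0 // ltnW.
have /gm -> // : (m <= j.-1)%N.
by move: mj; rewrite leq_eqVlt => /predU1P [mj|]; [rewrite mj oj in em | case: j {oj}].
Qed.

Lemma resolvent_supported m t g : (3 < m)%N -> ~~ odd m ->
  supported m g -> supported m (resolvent t g).
Proof.
move=> m3 em g0 j mj; have A0 := Aop_supported m3 em.
have h0 : supported m (g - t *: Aop g).
  by move=> i mi; rewrite !fctE g0 ?A0 // !scaleRE mulr0 subr0.
rewrite /resolvent /=; move: h0; set h := g - _ => h0.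
by rewrite !fctE h0 // (A0 _ (A0 _ h0)) // !scaleRE !(mulr0, addr0).
Qed.

End Operator.

Section Calculus.
Variables (R : realType) (V : normedModType R).

Lemma derive_const_line (W : normedModType R) (f : V -> W) (x v : V) :
  (forall h : R, f (h *: v + x) = f x) -> 'D_v f x = 0.
Proof.
move=> fline; apply: cvg_lim => //; apply: cvg_near_cst.
by near=> h; rewrite /= fline subrr scaler0.
Unshelve. all: by end_near. Qed.

Lemma derive_div (f g : V -> R) x v : derivable f x v -> derivable g x v -> g x != 0 ->
  'D_v (fun y => f y / g y) x = ('D_v f x * g x - f x * 'D_v g x) / g x ^+ 2.
Proof.
move=> df dg g0; have dV := derivableV g0 dg.
rewrite (deriveM df dV) deriveV // !scaleRE.
by field.
Qed.

Lemma is_derive_Aop (g : V -> nat -> R) (dg : nat -> R) x v :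
  (forall i, is_derive x v (fun y => g y i) (dg i)) ->
  forall j, is_derive x v (fun y => Aop (g y) j) (Aop dg j).
Proof.
move=> gdg j; case: (ltnP 3 j) => j3.
  rewrite (funext (fun y => Aop_tail (g y) j3)) Aop_tail //.
  by case: (odd j); [exact: gdg | exact: is_deriveN].
case: j j3 => [|[|[|[|j]]]] // _ /=; first exact: gdg.
- exact: is_deriveD.
- exact: is_deriveB (gdg 0%N) (is_deriveZ 4%:R (gdg 1%N)).
- exact: gdg.
Qed.

End Calculus.

Section OperatorElementary.
Variables (R : realType) (n : nat).
Local Notation U := 'rV[R]_n.

Lemma elementary_Aop (g : U -> nat -> R) : (forall i, elementary (fun x => g x i)) ->
  forall j, elementary (fun x => Aop (g x) j).
Proof.
move=> eg j; case: (ltnP 3 j) => j3.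
  apply: eq_elementary (fun x => esym (Aop_tail (g x) j3)) _.
  by case: (odd j); [exact: eg | exact: elementaryN].
case: j j3 => [|[|[|[|j]]]] // _ /=; first exact: eg.
- exact: elementaryD.
- apply: elementaryB (eg _) _.
  exact: elementaryM (elementary_cst 4%:R) (eg 1%N).
- exact: eg.
Qed.

Lemma elementary_resolvent (t : U -> R) (g : U -> nat -> R) :
  elementary t -> (forall i, elementary (fun x => g x i)) ->
  forall j, elementary (fun x => resolvent (t x) (g x) j).
Proof.
move=> et eg j.
have eh i : elementary (fun x => (g x - t x *: Aop (g x)) i).
  apply: eq_elementary (elementaryB (eg i) (elementaryM et (elementary_Aop eg i))).
  by move=> x; rewrite !fctE.
have ec : elementary (fun x => 1 + t x ^+ 2).
  exact: elementaryD (elementary_cst 1) (elementary_sqr et).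
have c0 x := sqr_add1_neq0 (t x).
have c20 x : (1 + t x ^+ 2) ^+ 2 != 0 by rewrite expf_neq0.
have := elementaryD (elementaryM (elementaryV ec c0) (eh j))
  (elementaryM (elementary_div (elementary_sqr et) (elementary_sqr ec) c20)
               (elementaryD (elementary_Aop (elementary_Aop eh) j) (eh j))).
by apply: eq_elementary => x; rewrite /resolvent !fctE.
Qed.

End OperatorElementary.

Section ContactForm.
Variables (R : realType) (k : nat).
Local Notation n := k.*2.+1.
Implicit Types (V : 'rV[R]_n -> 'rV[R]_n) (x : 'rV[R]_n).

Lemma dalphaC V x i j : dalpha V x i j = - dalpha V x j i.
Proof. by rewrite /dalpha opprB. Qed.

Lemma inord_succ_neq0 m j : (j < m)%N -> inord j.+1 != ord0 :> 'I_m.+1.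
Proof. by move=> jm; apply/eqP => /(congr1 val) /=; rewrite inordK. Qed.

Lemma alpha_wedge_dalpha_pow_eq0 V x (i1 : 'I_n) :
  (forall i, i != ord0 -> alpha V x i = 0) -> i1 != ord0 ->
  (forall j, j != ord0 -> dalpha V x i1 j = 0) ->
  alpha_wedge_dalpha_pow V x = 0.
Proof.
move=> alpha0 i1_neq0 i1_ker; rewrite /alpha_wedge_dalpha_pow big1 // => s _.
have [s0|s0] := eqVneq (s ord0) ord0; last by rewrite alpha0 // mulr0 mul0r.
have s_neq0 j : j != ord0 -> s j != ord0.
  by apply: contraNneq => sj0; rewrite -s0 in sj0; rewrite (perm_inj sj0).
set j1 := (s^-1)%g i1; have sj1 : s j1 = i1 by rewrite permKV.
have j1_gt0 : (0 < j1)%N.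
  rewrite lt0n; apply: contraNneq i1_neq0 => j10.
  by rewrite -sj1 (_ : j1 = ord0) ?s0 //; exact: val_inj.
have j1E := odd_double_half j1.-1; set m := (j1.-1)./2 in j1E.
have mk : (m < k)%N by have := ltn_ord j1; lia.
suff pair_m : dalpha V x (s (inord m.*2.+1)) (s (inord m.*2.+2)) = 0.
  by rewrite (bigD1 (Ordinal mk)) //= pair_m mul0r mulr0.
case: (odd j1.-1) in j1E.
- have -> : inord m.*2.+2 = j1 by apply: val_inj; rewrite /= inordK; lia.
  by rewrite sj1 dalphaC i1_ker ?oppr0 // s_neq0 // inord_succ_neq0 //; lia.
- have -> : inord m.*2.+1 = j1 by apply: val_inj; rewrite /= inordK; lia.
  by rewrite sj1 i1_ker // s_neq0 // inord_succ_neq0 //; lia.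
Qed.

End ContactForm.

Section Normalization.
Variables (R : realType) (n : nat).
Local Notation U := 'rV[R]_n.

Definition enorm (v : U) : R := Num.sqrt (\sum_(i < n) v 0 i ^+ 2).

Definition normalize (v : U) : U := (enorm v)^-1 *: v.

Lemma normalize_sum_sqr (v : U) : 0 < enorm v -> \sum_(i < n) normalize v 0 i ^+ 2 = 1.
Proof.
rewrite sqrtr_gt0 => v0.
have N0 : enorm v ^+ 2 != 0 by rewrite sqr_sqrtr ?ltW // gt_eqF.
under eq_bigr do rewrite mxE exprMn exprVn.
by rewrite -mulr_sumr sqr_sqrtr ?ltW // mulVf // gt_eqF.
Qed.

Lemma elementary_field_normalize (G : U -> U) : elementary_field G ->
  (forall x, 0 < enorm (G x)) -> elementary_field (fun x => normalize (G x)).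
Proof.
move=> eG G0 j.
have eN : elementary (fun x => enorm (G x)).
  apply: elementary_sqrt => [|x]; first by apply: elementary_sum => i; exact: elementary_sqr.
  by rewrite -sqrtr_gt0; exact: G0.
apply: eq_elementary (elementary_div (eG j) eN (fun x => lt0r_neq0 (G0 x))) => x.
by rewrite mxE mulrC.
Qed.

End Normalization.

Section Construction.
Variables (R : realType) (k : nat).
Hypothesis k2 : (2 <= k)%N.
Local Notation n := k.*2.+1.
Local Notation U := 'rV[R]_n.

Definition tcoord (x : U) : R := x 0 ord0.

Definition qcoord (x : U) (j : nat) : R := if (j < k.*2)%N then x 0 (inord j.+1) else 0.

Definition slope (x : U) : nat -> R := resolvent (tcoord x) (Aop (qcoord x)).

Definition direction (x : U) : U := \row_i if (i : nat) is j.+1 then slope x j else 1.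

Definition fiber_field (x : U) : U := normalize (direction x).

Lemma coordE (x : U) (i : 'I_n) : x 0 i = if (i : nat) is j.+1 then qcoord x j else tcoord x.
Proof.
case: i => [[|j] ij] /=; first by congr (x 0 _); exact: val_inj.
by rewrite /qcoord -ltnS ij; congr (x 0 _); apply: val_inj; rewrite /= inordK.
Qed.

Lemma direction0 x : direction x 0 ord0 = 1.
Proof. by rewrite mxE. Qed.

Lemma direction_succ x j : (j < k.*2)%N -> direction x 0 (inord j.+1) = slope x j.
Proof. by move=> jk; rewrite mxE inordK. Qed.

Lemma qcoord_supported x : supported k.*2 (qcoord x).
Proof. by move=> j kj; rewrite /qcoord ltnNge kj. Qed.

Lemma slope_supported x : supported k.*2 (slope x).
Proof.
have k3 : (3 < k.*2)%N by rewrite -(doubleS 1) leq_double.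
have ek : ~~ odd k.*2 by rewrite odd_double.
exact/(resolvent_supported _ k3 ek)/(Aop_supported k3 ek)/qcoord_supported.
Qed.

Lemma slopeE x : slope x + tcoord x *: Aop (slope x) = Aop (qcoord x).
Proof. exact: resolventE. Qed.

Lemma enorm_direction_gt0 x : 0 < enorm (direction x).
Proof.
rewrite sqrtr_gt0 (bigD1 ord0) //= direction0 expr1n (lt_le_trans ltr01) // lerDl.
by apply: sumr_ge0 => i _; exact: sqr_ge0.
Qed.

Lemma fiber_field_unit : unit_field fiber_field.
Proof. by move=> x; exact: normalize_sum_sqr (enorm_direction_gt0 x). Qed.

Lemma elementary_qcoord j : elementary (fun x : U => qcoord x j).
Proof. by rewrite /qcoord; case: (j < k.*2)%N; [exact: elementary_coord | exact: elementary_cst]. Qed.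

Lemma elementary_slope j : elementary (fun x : U => slope x j).
Proof.
apply: (elementary_resolvent (t := tcoord) (g := fun x => Aop (qcoord x))).
  exact: elementary_coord.
exact: elementary_Aop elementary_qcoord.
Qed.

Lemma elementary_field_fiber_field : elementary_field fiber_field.
Proof.
apply/elementary_field_normalize/enorm_direction_gt0 => i.
have ei : elementary (fun x : U => if (i : nat) is j.+1 then slope x j else 1).
  by case: (i : nat) => [|j]; [exact: elementary_cst | exact: elementary_slope].
by apply: eq_elementary ei => x; rewrite mxE.
Qed.

Lemma tcoord_line x s : tcoord (s *: direction x + x) = s + tcoord x.
Proof. by rewrite /tcoord 2!mxE direction0 mulr1. Qed.

Lemma qcoord_line x s : qcoord (s *: direction x + x) = qcoord x + s *: slope x.
Proof.
apply/funext => j; rewrite !fctE /qcoord; case: ifP => jk.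
  by rewrite 2!mxE direction_succ // addrC scaleRE.
by rewrite slope_supported ?scaler0 ?addr0 // leqNgt jk.
Qed.

Lemma slope_line x s : slope (s *: direction x + x) = slope x.
Proof.
rewrite {1}/slope tcoord_line qcoord_line; symmetry; apply: resolvent_unique.
have := slopeE x; move: (slope x) => w wE.
by rewrite linearD linearZ /= -wE scalerDl addrA addrAC.
Qed.

Lemma direction_line x s : direction (s *: direction x + x) = direction x.
Proof. by apply/rowP => i; rewrite [LHS]mxE [RHS]mxE slope_line. Qed.

Lemma fiber_field_line x h : fiber_field (h *: fiber_field x + x) = fiber_field x.
Proof. by rewrite /fiber_field /normalize scalerA direction_line. Qed.

Lemma fiber_field_line_fibration : line_fibration fiber_field.
Proof.
split; first exact: elementary_field_smooth elementary_field_fiber_field.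
split; first exact: fiber_field_unit.
by move=> x; exact: derive_const_line (fiber_field_line x).
Qed.

Lemma is_derive_qcoord x X j : is_derive x X (fun y => qcoord y j) (qcoord X j).
Proof. by rewrite /qcoord; case: (j < k.*2)%N; [exact: is_derive_coord | exact: is_derive_cst]. Qed.

Definition dslope (x X : U) (j : nat) : R := 'D_X (fun y => slope y j) x.

Lemma dslopeE x X : dslope x X + tcoord x *: Aop (dslope x X) + X 0 ord0 *: Aop (slope x) =
  Aop (qcoord X).
Proof.
apply/funext => j.
have Dw i : is_derive x X (fun y => slope y i) (dslope x X i).
  exact/derivableP/diff_derivable/elementary_differentiable/elementary_slope.
have Dt : is_derive x X tcoord (X 0 ord0) by exact: is_derive_coord.
have Dlhs : is_derive x X (fun y => slope y j + tcoord y * Aop (slope y) j)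
    (dslope x X j + (tcoord x *: Aop (dslope x X) j + Aop (slope x) j *: X 0 ord0)).
  exact: is_deriveD (Dw j) (is_deriveM Dt (is_derive_Aop Dw j)).
have Drhs := is_derive_Aop (is_derive_qcoord x X) j.
have lhsE : (fun y => slope y j + tcoord y * Aop (slope y) j) = (fun y => Aop (qcoord y) j).
  by apply/funext => y; rewrite -slopeE !fctE scaleRE.
have := derive_val (is_derive := Dlhs); rewrite lhsE (derive_val (is_derive := Drhs)) => ->.
by rewrite !fctE !scaleRE addrA [X 0 ord0 * _]mulrC.
Qed.

Lemma fiber_field_entry x i : fiber_field x 0 i = direction x 0 i / enorm (direction x).
Proof. by rewrite [LHS]mxE mulrC. Qed.

Lemma fiber_field0_neq0 x : fiber_field x 0 ord0 != 0.
Proof. by rewrite fiber_field_entry direction0 mul1r invr_neq0 // lt0r_neq0 // enorm_direction_gt0. Qed.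

Lemma slope_ratio x j : (j < k.*2)%N ->
  slope x j = fiber_field x 0 (inord j.+1) / fiber_field x 0 ord0.
Proof.
move=> jk; have N0 := lt0r_neq0 (enorm_direction_gt0 x).
by rewrite !fiber_field_entry direction0 direction_succ //; field.
Qed.

Lemma fiber_field_entry_derivable x X i : derivable (fun y => fiber_field y 0 i) x X.
Proof. exact/diff_derivable/elementary_differentiable/elementary_field_fiber_field. Qed.

Lemma derive_fiber_field_entry x X i :
  ('D_X fiber_field x) 0 i = 'D_X (fun y => fiber_field y 0 i) x.
Proof. by rewrite derive_mx ?mxE //; exact/diff_derivable/elementary_field_differentiable/elementary_field_fiber_field. Qed.

Lemma dslope_entry x X j : (j < k.*2)%N ->
  dslope x X j = (('D_X fiber_field x) 0 (inord j.+1) * fiber_field x 0 ord0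
                  - fiber_field x 0 (inord j.+1) * ('D_X fiber_field x) 0 ord0)
                 / fiber_field x 0 ord0 ^+ 2.
Proof.
move=> jk; rewrite /dslope (funext (fun y => slope_ratio y jk)) !derive_fiber_field_entry.
by rewrite derive_div ?fiber_field0_neq0 //; exact: fiber_field_entry_derivable.
Qed.

Lemma fiber_field_nondegenerate : nondegenerate_fibration fiber_field.
Proof.
move=> x X; rewrite /nabla => DV0.
have Dw0 : dslope x X = 0.
  apply/funext => j; case: (ltnP j k.*2) => jk.
    by rewrite dslope_entry // DV0 !mxE !(mul0r, mulr0, subr0).
  by rewrite /dslope (funext (fun y => slope_supported y jk)) derive_cst.
have qX : qcoord X = X 0 ord0 *: slope x.
  apply/eqP; rewrite -subr_eq0; apply/eqP/Aop_inj.
  move: (dslopeE x X); rewrite Dw0 linear0 scaler0 !add0r => qE.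
  by rewrite linearB linearZ /= -qE subrr.
exists (X 0 ord0 * enorm (direction x)); apply/rowP => i.
have N0 := lt0r_neq0 (enorm_direction_gt0 x).
rewrite [LHS]coordE !mxE; case: (nat_of_ord i) => [|j];
  by rewrite ?qX ?fctE ?scaleRE /tcoord mulrA mulfK // ?mulr1.
Qed.

Lemma slope_origin : slope 0 = 0.
Proof.
rewrite /slope (_ : qcoord 0 = 0) ?linear0 ?resolvent0 //.
by apply/funext => j; rewrite /qcoord mxE; case: ifP.
Qed.

Lemma direction_origin (i : 'I_n) : direction 0 0 i = (i == ord0)%:R.
Proof. by rewrite mxE slope_origin; case: i => [[|j] ij]. Qed.

Lemma fiber_field_origin (i : 'I_n) : fiber_field 0 0 i = (i == ord0)%:R.
Proof.
rewrite fiber_field_entry direction_origin (_ : enorm (direction 0) = 1) ?divr1 //.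
rewrite /enorm (bigD1 ord0) //= big1 => [|l /negbTE l0]; last by rewrite direction_origin l0 expr0n.
by rewrite direction_origin eqxx expr1n addr0 sqrtr1.
Qed.

Lemma nabla_fiber_field_origin X j : (j < k.*2)%N ->
  nabla fiber_field 0 X 0 (inord j.+1) = Aop (qcoord X) j.
Proof.
move=> jk; have := dslopeE 0 X; rewrite /tcoord mxE slope_origin linear0 scale0r !scaler0 !addr0.
move=> <-; rewrite dslope_entry // !fiber_field_origin eqxx (negbTE (inord_succ_neq0 jk)).
by rewrite mulr1 mul0r subr0 expr1n divr1.
Qed.

Lemma qcoord_e (i : 'I_n) j : qcoord (e_ R i) j = (j.+1 == i)%:R.
Proof.
rewrite /qcoord /e_; case: ifP => jk; first by rewrite mxE eqxx /= -(inj_eq val_inj) /= inordK.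
suff /negbTE -> : j.+1 != i by [].
by rewrite neq_ltn (leq_trans (ltn_ord i)) ?orbT // ltnS leqNgt jk.
Qed.

Lemma dalpha_origin (j : 'I_n) : j != ord0 -> dalpha fiber_field 0 (inord 1) j = 0.
Proof.
move=> j0; have j_gt0 : (0 < j)%N by move: j0; rewrite -(inj_eq val_inj) lt0n.
have k_gt0 : (0 < k.*2)%N by rewrite double_gt0 ltnW.
have jE : j = inord j.-1.+1 by apply: val_inj; rewrite /= inordK ?prednK.
have e1 : qcoord (e_ R (inord 1)) = fun i => (i == 0%N)%:R.
  by apply/funext => i; rewrite qcoord_e inordK.
have jk : (j.-1 < k.*2)%N by rewrite -ltnS prednK.
rewrite /dalpha {1}jE.
transitivity (Aop (fun i => (i == 0%N)%:R) j.-1 - qcoord (e_ R j) 2).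
  congr (_ - _); first by rewrite nabla_fiber_field_origin // e1.
  exact: nabla_fiber_field_origin k_gt0.
rewrite Aop_delta0 qcoord_e.
by case: (nat_of_ord j) j_gt0 => [//|m _]; rewrite eq_sym subrr.
Qed.

Lemma fiber_field_not_contact : ~ orth_contact fiber_field.
Proof.
move/(_ 0)/negP; apply; apply/eqP.
apply: (alpha_wedge_dalpha_pow_eq0 (i1 := inord 1)) => [i i0||]; last exact: dalpha_origin.
  by rewrite /alpha fiber_field_origin (negbTE i0).
by apply: inord_succ_neq0; rewrite double_gt0 ltnW.
Qed.

End Construction.

Theorem theorem1p6 (R : realType) (k : nat) (hk : (2 <= k)%N) :
  exists V : 'rV[R]_(k.*2.+1) -> 'rV[R]_(k.*2.+1),
    line_fibration V /\ nondegenerate_fibration V /\ ~ orth_contact V.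
Proof.
exists (@fiber_field R k); split; first exact: fiber_field_line_fibration.
by split; [exact: fiber_field_nondegenerate | exact: fiber_field_not_contact].
Qed.
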